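(* Let $d\ge2$ and $L\ge1$ be integers, and define for real $x\in[0,L-1]$ $$\rho(x)=\frac{\Gamma(L+d)\,\Gamma(L)}{\Gamma(L+d+x)\,\Gamma(L-x)}.$$ Then $0<\rho(x)\le \exp\!\left(-\frac{2x(x+d)}{2L+d}\right)$ for all $x\in[0,L-1]$. In particular, for integers $0\le k\le L-1$, $$\frac{(L-1+d)!\,(L-1)!}{(L-1+d+k)!\,(L-1-k)!}\le e^{-\frac{2k(k+d)}{2L+d}}.$$
   Context: $\Gamma$ is the Euler gamma function, $\Gamma(n)=(n-1)!$. *)

From Stdlib Require Import Reals Factorial.
From Coquelicot Require Import Coquelicot.
Open Scope R_scope.

(* Euler Gamma function, via Euler's integral
   Gamma(s) = \int_0^{+oo} t^(s-1) e^(-t) dt   (valid for s > 0;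
   all arguments used in the statement are >= 1). *)
Definition Gamma (s : R) : R :=
  RInt_gen (fun t => Rpower t (s - 1) * exp (- t))
           (at_right 0) (Rbar_locally p_infty).

Definition rho (d L : nat) (x : R) : R :=
  Gamma (INR L + INR d) * Gamma (INR L)
  / (Gamma (INR L + INR d + x) * Gamma (INR L - x)).

From Stdlib Require Import Reals Lra Lia Factorial Classical.
From Coquelicot Require Import Coquelicot.
Open Scope R_scope.

(* With b = L, Euler's recursion gives
     rho(x) = [Gamma(b)^2 / (Gamma(b - x) Gamma(b + x))] * [(b)_d / (b + x)_d]
   where (s)_n is the rising factorial.
   First factor: Gamma is midpoint log-convex (AM-GM under Euler's integral), so
   Gamma(b + N)^2 <= Gamma(b + N - x) Gamma(b + N + x); unfolding the recursion N times
   bounds the factor by prod_(i<N) (1 - x^2/(b+i)^2) <= exp(-x^2 (1/b - 1/(b+N))).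
   Second factor: ln(1 + u) >= 2u/(2 + u) bounds (b+i)/(b+x+i) by exp(-2x/(2(b+i)+x)),
   and convexity of 1/y at the mean of the 2(b+i)+x bounds the exponent sum by
   2xd/(2b+x+d-1).  For N of order b^3 the two exponents together dominate
   2x(x+d)/(2b+d). *)

Lemma exp_le_exp x y : x <= y -> exp x <= exp y.
Proof. intros [Hlt|<-]; [left; apply exp_increasing, Hlt|right; reflexivity]. Qed.

Lemma ln_le_sub_1 y : 0 < y -> ln y <= y - 1.
Proof. intros Hy; generalize (exp_ineq1_le (ln y)); rewrite exp_ln; lra. Qed.

Lemma ln_1_add_ge u : 0 <= u -> 2 * u / (2 + u) <= ln (1 + u).
Proof.
  intros Hu; destruct (Req_dec u 0) as [->|Hu0].
  { rewrite !Rplus_0_r, ln_1; unfold Rdiv; rewrite Rmult_0_r, Rmult_0_l; lra. }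
  set (k := fun y => ln (1 + y) - 2 * y / (2 + y)).
  destruct (MVT_gen k 0 u (fun y => / (1 + y) - 4 / ((2 + y) * (2 + y)))) as [c [Hc Hk]].
  - intros y Hy; rewrite Rmin_left, Rmax_right in Hy by lra.
    unfold k; auto_derive; [repeat split; lra|field; lra].
  - intros y Hy; rewrite Rmin_left, Rmax_right in Hy by lra.
    apply continuity_pt_filterlim.
    apply (ex_derive_continuous (K := R_AbsRing) (V := R_NormedModule)).
    unfold k; auto_derive; repeat split; lra.
  - rewrite Rmin_left, Rmax_right in Hc by lra.
    unfold k in Hk; rewrite Rplus_0_r, ln_1 in Hk.
    replace (/ (1 + c) - 4 / ((2 + c) * (2 + c)))
      with (c * c / ((1 + c) * ((2 + c) * (2 + c)))) in Hk by (field; lra).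
    assert (0 <= c * c / ((1 + c) * ((2 + c) * (2 + c))) * (u - 0)).
    { apply Rmult_le_pos; [|lra].
      apply Rdiv_le_0_compat; [apply Rle_0_sqr|apply Rmult_lt_0_compat; [lra|nra]]. }
    unfold Rdiv in *; rewrite Rmult_0_r, Rmult_0_l in Hk; lra.
Qed.

Lemma le_mul_exp_opp_pade c x : 0 < c -> 0 <= x ->
  c <= (c + x) * exp (- (2 * x / (2 * c + x))).
Proof.
  intros Hc Hx.
  assert (H := ln_1_add_ge (x / c) ltac:(apply Rdiv_le_0_compat; lra)).
  replace (2 * (x / c) / (2 + x / c)) with (2 * x / (2 * c + x)) in H by (field; lra).
  replace (1 + x / c) with ((c + x) / c) in H by (field; lra).
  assert (Hexp : exp (2 * x / (2 * c + x)) <= (c + x) / c).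
  { rewrite <- (exp_ln ((c + x) / c)) by (apply Rdiv_lt_0_compat; lra).
    apply exp_le_exp, H. }
  rewrite exp_Ropp.
  assert (0 < exp (2 * x / (2 * c + x))) by apply exp_pos.
  apply Rmult_le_reg_r with (exp (2 * x / (2 * c + x))); [assumption|].
  rewrite Rmult_assoc, Rinv_l, Rmult_1_r by lra.
  apply Rmult_le_compat_l with (r := c) in Hexp; [|lra].
  replace (c * ((c + x) / c)) with (c + x) in Hexp by (field; lra); lra.
Qed.

Lemma sub_sqr_le_mul_exp c x : 0 < c ->
  (c - x) * (c + x) <= c * c * exp (- (x * x * (/ c - / (c + 1)))).
Proof.
  intros Hc.
  assert (Hq : / c - / (c + 1) <= / (c * c)).
  { replace (/ c - / (c + 1)) with (/ (c * (c + 1))) by (field; lra).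
    apply Rinv_le_contravar; nra. }
  assert (H1 := exp_ineq1_le (- (x * x * (/ c - / (c + 1))))).
  assert (H2 : x * x * (/ c - / (c + 1)) <= x * x / (c * c))
    by (unfold Rdiv; apply Rmult_le_compat_l; [nra|exact Hq]).
  replace ((c - x) * (c + x)) with (c * c * (1 - x * x / (c * c))) by (field; lra).
  apply Rmult_le_compat_l; nra.
Qed.

Lemma inv_ge_tangent m y : 0 < m -> 0 < y -> 2 / m - y / (m * m) <= / y.
Proof.
  intros Hm Hy.
  assert (Hq : / y - (2 / m - y / (m * m)) = (m - y) * (m - y) / (y * (m * m)))
    by (field; lra).
  assert (0 <= (m - y) * (m - y) / (y * (m * m)))
    by (apply Rdiv_le_0_compat; [apply Rle_0_sqr|apply Rmult_lt_0_compat; nra]).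
  lra.
Qed.

Lemma double_le_weighted_sum lam p q r : 0 < lam -> 0 <= p -> 0 <= q ->
  r * r = p * q -> 2 * r <= lam * p + / lam * q.
Proof.
  intros Hlam Hp Hq Hpq.
  assert (Hab : (lam * p) * (/ lam * q) = r * r) by (rewrite Hpq; field; lra).
  assert (0 <= / lam * q) by (apply Rmult_le_pos; [left; apply Rinv_0_lt_compat|]; lra).
  assert (0 <= lam * p) by (apply Rmult_le_pos; lra).
  set (a := lam * p) in *; set (b := / lam * q) in *.
  assert (Hsq : (2 * r) * (2 * r) <= (a + b) * (a + b))
    by (generalize (Rle_0_sqr (a - b)); unfold Rsqr; nra).
  apply Rnot_lt_le; intros Hlt.
  assert ((a + b) * (a + b) < (2 * r) * (2 * r)) by (apply Rmult_le_0_lt_compat; lra).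
  lra.
Qed.

Lemma eventually_pos_bounds :
  filter_prod (at_right 0) (Rbar_locally p_infty) (fun ab => 0 < fst ab <= snd ab).
Proof.
  apply (Filter_prod _ _ _ (fun u => 0 < u < 1) (fun v => 1 < v)).
  - exists (mkposreal 1 Rlt_0_1); intros u Hu Hu0; split; [exact Hu0|].
    apply Rabs_def2 in Hu; unfold minus, plus, opp in Hu; simpl in Hu; lra.
  - exists 1; auto.
  - simpl; intros; lra.
Qed.

Lemma eventually_on_pos (P : R -> Prop) : (forall t, 0 < t -> P t) ->
  filter_prod (at_right 0) (Rbar_locally p_infty)
    (fun ab => forall t, Rmin (fst ab) (snd ab) <= t -> P t).
Proof.
  intros HP; eapply filter_imp; [|exact eventually_pos_bounds].
  intros [a b] Hab t Ht; simpl in *; apply HP.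
  rewrite Rmin_left in Ht; lra.
Qed.

Lemma ball_0_of_Rabs (y eps : R) : Rabs y < eps -> ball 0 eps y.
Proof.
  intros H; unfold ball; simpl; unfold AbsRing_ball, abs, minus, plus, opp; simpl.
  rewrite Ropp_0, Rplus_0_r; exact H.
Qed.

Lemma is_RInt_gen_le_pos (f g : R -> R) (lf lg : R) :
  (forall t, 0 < t -> 0 <= f t <= g t) ->
  is_RInt_gen f (at_right 0) (Rbar_locally p_infty) lf ->
  is_RInt_gen g (at_right 0) (Rbar_locally p_infty) lg -> lf <= lg.
Proof.
  intros Hfg Hf Hg.
  apply Rle_trans with (norm lf); [apply Rle_abs|].
  apply (RInt_gen_norm (V := R_CompleteNormedModule) (Fa := at_right 0)
           (Fb := Rbar_locally p_infty) f g lf lg); auto.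
  - eapply filter_imp; [|exact eventually_pos_bounds]; simpl; intros; lra.
  - eapply filter_imp; [|exact (eventually_on_pos _ Hfg)].
    intros [a b] H t Ht; simpl in *.
    destruct (H t (Rle_trans _ _ _ (Rmin_l a b) (proj1 Ht))) as [H0 H1].
    unfold norm; simpl; unfold abs; simpl; rewrite Rabs_pos_eq; lra.
Qed.

Lemma is_RInt_gen_pos_sup (f : R -> R) (M : R) :
  (forall t, 0 < t -> 0 < f t) ->
  (forall u v, 0 < u -> 0 < v -> ex_RInt f u v) ->
  (forall u v, 0 < u <= v -> RInt f u v <= M) ->
  exists l, is_RInt_gen f (at_right 0) (Rbar_locally p_infty) l /\
    (forall u v, 0 < u <= v -> RInt f u v <= l).
Proof.
  intros Hpos Hint HM.
  set (E := fun y : R => exists u v, 0 < u <= v /\ y = RInt f u v).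
  assert (HB : bound E) by (exists M; intros y [u [v [Huv ->]]]; auto).
  assert (HE : exists y, E y) by (exists (RInt f 1 1), 1, 1; split; [lra|auto]).
  destruct (completeness E HB HE) as [l [Hub Hlub]].
  exists l; split; [|intros u v Huv; apply Hub; exists u, v; auto].
  intros P [eps HP].
  assert (Hy : exists y, E y /\ l - eps < y).
  { apply NNPP; intros Hn.
    assert (Hl : is_upper_bound E (l - eps)).
    { intros y Ey; apply Rnot_lt_le; intros Hlt; apply Hn; exists y; auto. }
    specialize (Hlub _ Hl); destruct eps; simpl in *; lra. }
  destruct Hy as [y [[u0 [v0 [Huv0 ->]]] Hy]].
  assert (Hnonneg : forall a c, 0 < a <= c -> 0 <= RInt f a c)
    by (intros; apply RInt_ge_0; [lra|apply Hint; lra|intros; left; apply Hpos; lra]).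
  assert (Hmono : forall u v, 0 < u <= u0 -> v0 <= v -> RInt f u0 v0 <= RInt f u v).
  { intros u v Hu Hv.
    rewrite <- (RInt_Chasles f u u0 v), <- (RInt_Chasles f u0 v0 v) by (apply Hint; lra).
    generalize (Hnonneg u u0 ltac:(lra)) (Hnonneg v0 v ltac:(lra)).
    unfold plus; simpl; lra. }
  apply (Filter_prod _ _ _ (fun u => 0 < u < u0) (fun v => v0 < v)).
  - exists (mkposreal u0 (proj1 Huv0)); intros u Hu Hu0; split; [exact Hu0|].
    apply Rabs_def2 in Hu; unfold minus, plus, opp in Hu; simpl in Hu; lra.
  - exists v0; auto.
  - intros u v Hu Hv; exists (RInt f u v); split.
    + apply (RInt_correct (V := R_CompleteNormedModule)), Hint; lra.
    + apply HP.
      assert (RInt f u v <= l) by (apply Hub; exists u, v; split; [lra|auto]).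
      assert (RInt f u0 v0 <= RInt f u v) by (apply Hmono; simpl in *; lra).
      apply Rabs_def1; unfold minus, plus, opp; simpl; lra.
Qed.

Definition gamma_integrand (s t : R) : R := exp ((s - 1) * ln t) * exp (- t).

Lemma Gamma_RInt_gen s :
  Gamma s = RInt_gen (gamma_integrand s) (at_right 0) (Rbar_locally p_infty).
Proof. reflexivity. Qed.

Lemma gamma_integrand_pos s t : 0 < gamma_integrand s t.
Proof. apply Rmult_lt_0_compat; apply exp_pos. Qed.

Lemma continuous_gamma_integrand s t : 0 < t -> continuous (gamma_integrand s) t.
Proof.
  intros Ht; apply (ex_derive_continuous (K := R_AbsRing) (V := R_NormedModule)).
  unfold gamma_integrand; auto_derive; auto.
Qed.

Lemma ex_RInt_gamma_integrand s u v : 0 < u -> 0 < v -> ex_RInt (gamma_integrand s) u v.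
Proof.
  intros Hu Hv; apply (ex_RInt_continuous (V := R_CompleteNormedModule)).
  intros t Ht; apply continuous_gamma_integrand.
  apply Rlt_le_trans with (Rmin u v); [apply Rmin_case|]; lra.
Qed.

Lemma gamma_integrand_mul_sub_add m x t : 0 < t ->
  gamma_integrand (m - x) t * gamma_integrand (m + x) t
  = gamma_integrand m t * gamma_integrand m t.
Proof.
  intros Ht; unfold gamma_integrand.
  rewrite <- !Rmult_assoc, (Rmult_comm _ (exp ((m + x - 1) * ln t))), <- !Rmult_assoc,
    <- !exp_plus.
  f_equal; f_equal; ring.
Qed.

(* From [ln (t / 2s) <= t / 2s - 1]. *)
Lemma gamma_integrand_le_exp s t : 1 <= s -> 0 < t ->
  gamma_integrand s t <= exp ((s - 1) * ln (2 * s)) * exp (- t / 2).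
Proof.
  intros Hs Ht; unfold gamma_integrand.
  assert (Hln : (s - 1) * ln t <= (s - 1) * ln (2 * s) + t / 2).
  { assert (Hq : 0 < t / (2 * s)) by (apply Rdiv_lt_0_compat; lra).
    replace (ln t) with (ln (2 * s) + ln (t / (2 * s)))
      by (rewrite <- ln_mult by lra; f_equal; field; lra).
    generalize (ln_le_sub_1 _ Hq); intros Hl.
    assert (Hsq : (s - 1) * (t / (2 * s)) <= t / 2)
      by (replace ((s - 1) * (t / (2 * s))) with (t / 2 - t / (2 * s)) by (field; lra); lra).
    nra. }
  replace (- t / 2) with (t / 2 + - t) by field.
  rewrite (exp_plus (t / 2)), <- Rmult_assoc.
  apply Rmult_le_compat_r; [left; apply exp_pos|].
  rewrite <- exp_plus; apply exp_le_exp, Hln.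
Qed.

Lemma RInt_gamma_integrand_le s u v : 1 <= s -> 0 < u <= v ->
  RInt (gamma_integrand s) u v <= 2 * exp ((s - 1) * ln (2 * s)).
Proof.
  intros Hs Huv; set (K := exp ((s - 1) * ln (2 * s))).
  assert (HI : is_RInt (fun t => K * exp (- t / 2)) u v
                 (- 2 * K * exp (- v / 2) - - 2 * K * exp (- u / 2))).
  { apply (is_RInt_derive (fun t => - 2 * K * exp (- t / 2))).
    - intros t _; auto_derive; auto.
      unfold Rdiv; field.
    - intros t _; apply (ex_derive_continuous (K := R_AbsRing) (V := R_NormedModule)).
      auto_derive; auto. }
  apply Rle_trans with (RInt (fun t => K * exp (- t / 2)) u v).
  - apply RInt_le; [lra|apply ex_RInt_gamma_integrand; lra|eexists; exact HI|].
    intros t Ht; apply gamma_integrand_le_exp; lra.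
  - rewrite (is_RInt_unique _ _ _ _ HI).
    assert (0 < K) by apply exp_pos.
    assert (0 < exp (- v / 2)) by apply exp_pos.
    assert (exp (- u / 2) < 1) by (rewrite <- exp_0; apply exp_increasing; lra).
    nra.
Qed.

Lemma Gamma_sup s : 1 <= s ->
  is_RInt_gen (gamma_integrand s) (at_right 0) (Rbar_locally p_infty) (Gamma s) /\
  (forall u v, 0 < u <= v -> RInt (gamma_integrand s) u v <= Gamma s).
Proof.
  intros Hs.
  destruct (is_RInt_gen_pos_sup (gamma_integrand s) (2 * exp ((s - 1) * ln (2 * s))))
    as [l [Hl Hle]].
  - intros; apply gamma_integrand_pos.
  - apply ex_RInt_gamma_integrand.
  - intros; apply RInt_gamma_integrand_le; auto.
  - replace (Gamma s) with l by (symmetry; apply is_RInt_gen_unique; exact Hl); auto.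
Qed.

Lemma is_RInt_gen_Gamma s : 1 <= s ->
  is_RInt_gen (gamma_integrand s) (at_right 0) (Rbar_locally p_infty) (Gamma s).
Proof. intros Hs; apply (Gamma_sup s Hs). Qed.

Lemma Gamma_pos s : 1 <= s -> 0 < Gamma s.
Proof.
  intros Hs; apply Rlt_le_trans with (RInt (gamma_integrand s) 1 2).
  - apply RInt_gt_0; [lra|intros; apply gamma_integrand_pos|].
    intros; apply continuous_gamma_integrand; lra.
  - apply (Gamma_sup s Hs); lra.
Qed.

Lemma is_derive_gamma_integrand_succ s t : 0 < t ->
  is_derive (gamma_integrand (s + 1)) t
    (s * gamma_integrand s t - gamma_integrand (s + 1) t).
Proof.
  intros Ht; unfold gamma_integrand; auto_derive; auto.
  replace ((s + 1 - 1) * ln t) with ((s - 1) * ln t + ln t) by ring.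
  rewrite exp_plus, exp_ln by exact Ht.
  field; lra.
Qed.

Lemma gamma_integrand_lim_0 s : 1 < s ->
  filterlim (gamma_integrand s) (at_right 0) (locally 0).
Proof.
  intros Hs; apply filterlim_locally; intros eps.
  set (delta := Rmin 1 (exp (ln eps / (s - 1)))).
  assert (Hdelta : 0 < delta) by (apply Rmin_case; [lra|apply exp_pos]).
  exists (mkposreal delta Hdelta); intros t Hb Ht.
  apply Rabs_def2 in Hb; unfold minus, plus, opp in Hb; simpl in Hb.
  assert (Ht1 : t < 1) by (generalize (Rmin_l 1 (exp (ln eps / (s - 1)))); fold delta; lra).
  assert (Htd : t < exp (ln eps / (s - 1))).
  { generalize (Rmin_r 1 (exp (ln eps / (s - 1)))); fold delta; lra. }
  apply ball_0_of_Rabs; unfold gamma_integrand.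
  rewrite Rabs_pos_eq by (left; apply Rmult_lt_0_compat; apply exp_pos).
  assert (Hln : (s - 1) * ln t < ln eps).
  { apply ln_increasing in Htd; [|exact Ht]; rewrite ln_exp in Htd.
    apply Rmult_lt_compat_l with (r := s - 1) in Htd; [|lra].
    replace ((s - 1) * (ln eps / (s - 1))) with (ln eps) in Htd by (field; lra); exact Htd. }
  rewrite <- (exp_ln eps) by apply cond_pos.
  rewrite <- (Rmult_1_r (exp (ln eps))).
  apply Rmult_le_0_lt_compat; try (left; apply exp_pos).
  - apply exp_increasing; exact Hln.
  - rewrite <- exp_0; apply exp_increasing; lra.
Qed.

Lemma gamma_integrand_lim_p_infty s : 1 <= s ->
  filterlim (gamma_integrand s) (Rbar_locally p_infty) (locally 0).
Proof.
  intros Hs; apply filterlim_locally; intros eps.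
  set (K := exp ((s - 1) * ln (2 * s))).
  assert (HK : 0 < K) by apply exp_pos.
  assert (Hep : 0 < eps / K) by (apply Rdiv_lt_0_compat; [apply cond_pos|exact HK]).
  exists (Rmax 1 (- 2 * ln (eps / K))); intros t Ht.
  generalize (Rmax_l 1 (- 2 * ln (eps / K))) (Rmax_r 1 (- 2 * ln (eps / K))); intros H1 H2.
  apply ball_0_of_Rabs.
  rewrite Rabs_pos_eq by (left; apply gamma_integrand_pos).
  eapply Rle_lt_trans; [apply gamma_integrand_le_exp; lra|]; fold K.
  replace (pos eps) with (K * (eps / K)) by (field; lra).
  apply Rmult_lt_compat_l; [exact HK|].
  rewrite <- (exp_ln (eps / K)) by exact Hep; apply exp_increasing; lra.
Qed.

(* Integration by parts against [d/dt (t^s e^-t)]. *)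
Lemma Gamma_succ s : 1 <= s -> Gamma (s + 1) = s * Gamma s.
Proof.
  intros Hs.
  set (F := gamma_integrand (s + 1)).
  set (F' := fun t => s * gamma_integrand s t - gamma_integrand (s + 1) t).
  assert (HF : forall t, 0 < t -> is_derive F t (F' t))
    by (intros; apply is_derive_gamma_integrand_succ; auto).
  assert (HD : is_RInt_gen (Derive F) (at_right 0) (Rbar_locally p_infty) (0 - 0)).
  { apply is_RInt_gen_Derive.
    - eapply filter_imp; [|apply (eventually_on_pos (ex_derive F))];
        [intros ab H t Ht; apply H, Ht|intros t Ht; eexists; apply HF, Ht].
    - eapply filter_imp; [|apply (eventually_on_pos (continuous (Derive F)))];
        [intros ab H t Ht; apply H, Ht|intros t Ht].
      apply continuous_ext_loc with F'.
      + exists (mkposreal t Ht); intros y Hy.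
        apply Rabs_def2 in Hy; unfold minus, plus, opp in Hy; simpl in Hy.
        symmetry; apply is_derive_unique, HF; lra.
      + apply (ex_derive_continuous (K := R_AbsRing) (V := R_NormedModule)).
        unfold F', gamma_integrand; auto_derive; auto.
    - apply gamma_integrand_lim_0; lra.
    - apply gamma_integrand_lim_p_infty; lra. }
  assert (HI := is_RInt_gen_minus _ _ _ _
                  (is_RInt_gen_scal _ s _ (is_RInt_gen_Gamma s Hs)) HD).
  rewrite Gamma_RInt_gen; apply is_RInt_gen_unique.
  replace (s * Gamma s) with (minus (scal s (Gamma s)) (0 - 0))
    by (unfold minus, plus, opp, scal; simpl; unfold mult; simpl; ring).
  eapply is_RInt_gen_ext; [|exact HI].
  eapply filter_imp; [|apply (eventually_on_pos (fun t =>
    minus (scal s (gamma_integrand s t)) (Derive F t) = gamma_integrand (s + 1) t))].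
  - intros ab H t Ht; apply H, Rlt_le, Ht.
  - intros t Ht; rewrite (is_derive_unique _ _ _ (HF t Ht)).
    unfold F', minus, plus, opp, scal; simpl; unfold mult; simpl; ring.
Qed.

(* Integrate the pointwise AM-GM bound [2 g_m <= lam g_(m-x) + g_(m+x) / lam],
   where g = gamma_integrand and [lam = Gamma m / Gamma (m - x)]. *)
Lemma Gamma_sqr_le m x : 0 <= x -> 1 <= m - x ->
  Gamma m * Gamma m <= Gamma (m - x) * Gamma (m + x).
Proof.
  intros Hx Hm.
  assert (G0 := Gamma_pos m ltac:(lra)).
  assert (G1 := Gamma_pos (m - x) ltac:(lra)).
  set (lam := Gamma m / Gamma (m - x)).
  assert (Hlam : 0 < lam) by (apply Rdiv_lt_0_compat; auto).
  assert (Hle : 2 * Gamma m <= lam * Gamma (m - x) + / lam * Gamma (m + x)).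
  { assert (I0 := is_RInt_gen_Gamma m ltac:(lra)).
    assert (I1 := is_RInt_gen_Gamma (m - x) ltac:(lra)).
    assert (I2 := is_RInt_gen_Gamma (m + x) ltac:(lra)).
    assert (Hl := is_RInt_gen_scal _ 2 _ I0).
    assert (Hr := is_RInt_gen_plus _ _ _ _
        (is_RInt_gen_scal _ lam _ I1) (is_RInt_gen_scal _ (/ lam) _ I2)).
    refine (is_RInt_gen_le_pos _ _ _ _ _ Hl Hr).
    intros t Ht; simpl; unfold plus, scal; simpl; unfold mult; simpl.
    split; [left; apply Rmult_lt_0_compat; [lra|apply gamma_integrand_pos]|].
    apply double_le_weighted_sum; try (left; apply gamma_integrand_pos); auto.
    symmetry; apply gamma_integrand_mul_sub_add, Ht. }
  unfold lam in Hle.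
  replace (Gamma m / Gamma (m - x) * Gamma (m - x)) with (Gamma m) in Hle by (field; lra).
  replace (/ (Gamma m / Gamma (m - x)) * Gamma (m + x))
    with (Gamma (m - x) * Gamma (m + x) / Gamma m) in Hle by (field; lra).
  apply Rmult_le_reg_r with (/ Gamma m); [apply Rinv_0_lt_compat; exact G0|].
  replace (Gamma m * Gamma m * / Gamma m) with (Gamma m) by (field; lra).
  unfold Rdiv in Hle; lra.
Qed.

Fixpoint rising (s : R) (n : nat) : R :=
  match n with O => 1 | S n => rising s n * (s + INR n) end.

Lemma rising_pos s n : 0 < s -> 0 < rising s n.
Proof.
  intros Hs; induction n as [|n IH]; simpl; [lra|].
  apply Rmult_lt_0_compat; [exact IH|generalize (pos_INR n); lra].
Qed.

Lemma rising_1 n : rising 1 n = INR (fact n).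
Proof.
  induction n as [|n IH]; [reflexivity|].
  simpl rising; rewrite IH; change (fact (S n)) with (S n * fact n)%nat.
  rewrite mult_INR, S_INR; ring.
Qed.

Lemma Gamma_add_nat s n : 1 <= s -> Gamma (s + INR n) = Gamma s * rising s n.
Proof.
  intros Hs; induction n as [|n IH]; simpl rising.
  - simpl; rewrite Rplus_0_r; ring.
  - rewrite S_INR, <- Rplus_assoc, Gamma_succ, IH by (generalize (pos_INR n); lra); ring.
Qed.

Lemma Gamma_nat_succ n : Gamma (INR n + 1) = INR (fact n) * Gamma 1.
Proof. rewrite Rplus_comm, Gamma_add_nat, rising_1 by lra; ring. Qed.

Lemma rising_sub_mul_add_le b x n : 0 <= x < b ->
  rising (b - x) n * rising (b + x) n
  <= rising b n * rising b n * exp (- (x * x * (/ b - / (b + INR n)))).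
Proof.
  intros Hx; induction n as [|n IH]; simpl rising.
  - simpl; rewrite Rplus_0_r, Rminus_diag, Rmult_0_r, Ropp_0, exp_0; lra.
  - assert (Hn := pos_INR n); set (c := b + INR n).
    assert (Hstep := sub_sqr_le_mul_exp c x ltac:(unfold c; lra)).
    replace (b + INR (S n)) with (c + 1) by (unfold c; rewrite S_INR; ring).
    replace (- (x * x * (/ b - / (c + 1))))
      with (- (x * x * (/ b - / c)) + - (x * x * (/ c - / (c + 1)))) by ring.
    rewrite exp_plus.
    replace (rising (b - x) n * (b - x + INR n) * (rising (b + x) n * (b + x + INR n)))
      with (rising (b - x) n * rising (b + x) n * ((c - x) * (c + x))) by (unfold c; ring).
    replace (rising b n * c * (rising b n * c) *
             (exp (- (x * x * (/ b - / c))) * exp (- (x * x * (/ c - / (c + 1))))))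
      with (rising b n * rising b n * exp (- (x * x * (/ b - / c))) *
            (c * c * exp (- (x * x * (/ c - / (c + 1)))))) by (unfold c; ring).
    apply Rmult_le_compat; [|unfold c; nra|exact IH|exact Hstep].
    apply Rmult_le_pos; left; apply rising_pos; lra.
Qed.

(* Each factor is bounded with [le_mul_exp_opp_pade], and the resulting sum
   [sum_i 2x / (2(b + i) + x)] with the tangent line of [y => 1/y] at [m]. *)
Lemma rising_le_tangent b x m n : 0 < b -> 0 <= x -> 0 < m ->
  rising b n <= rising (b + x) n *
    exp (- (2 * x * (2 * INR n / m - (INR n * (2 * b + x) + INR n * (INR n - 1)) / (m * m)))).
Proof.
  intros Hb Hx Hm; induction n as [|n IH]; simpl rising.
  - replace (INR 0) with 0 by reflexivity.
    replace (2 * 0 / m - (0 * (2 * b + x) + 0 * (0 - 1)) / (m * m)) with 0 by (field; lra).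
    rewrite Rmult_0_r, Ropp_0, exp_0; lra.
  - assert (Hn := pos_INR n); set (y := 2 * (b + INR n) + x).
    assert (Hfactor := le_mul_exp_opp_pade (b + INR n) x ltac:(lra) Hx).
    assert (Htangent : 2 * x * (2 / m - y / (m * m)) <= 2 * x / y).
    { unfold Rdiv at 3; apply Rmult_le_compat_l; [lra|].
      apply inv_ge_tangent; unfold y; lra. }
    set (e := 2 * x * (2 * INR n / m - (INR n * (2 * b + x) + INR n * (INR n - 1)) / (m * m))).
    replace (2 * x * (2 * INR (S n) / m
               - (INR (S n) * (2 * b + x) + INR (S n) * (INR (S n) - 1)) / (m * m)))
      with (e + 2 * x * (2 / m - y / (m * m))) by (unfold e, y; rewrite S_INR; field; lra).
    apply Rle_trans with (rising (b + x) n * exp (- e) *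
                            ((b + INR n + x) * exp (- (2 * x / y)))).
    + apply Rmult_le_compat; [left; apply rising_pos; lra|lra|exact IH|exact Hfactor].
    + replace (rising (b + x) n * (b + x + INR n) * exp (- (e + 2 * x * (2 / m - y / (m * m)))))
        with (rising (b + x) n * exp (- e) *
              ((b + INR n + x) * exp (- (2 * x * (2 / m - y / (m * m))))))
        by (rewrite Ropp_plus_distr, exp_plus; ring).
      apply Rmult_le_compat_l;
        [apply Rmult_le_pos; [left; apply rising_pos; lra|left; apply exp_pos]|].
      apply Rmult_le_compat_l; [lra|].
      apply exp_le_exp; lra.
Qed.

Lemma rising_le_mul_exp b x n : 0 < b -> 0 <= x -> 0 < 2 * b + x + INR n - 1 ->
  rising b n <= rising (b + x) n * exp (- (2 * x * INR n / (2 * b + x + INR n - 1))).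
Proof.
  intros Hb Hx Hm.
  replace (2 * x * INR n / (2 * b + x + INR n - 1))
    with (2 * x * (2 * INR n / (2 * b + x + INR n - 1)
           - (INR n * (2 * b + x) + INR n * (INR n - 1))
             / ((2 * b + x + INR n - 1) * (2 * b + x + INR n - 1)))) by (field; lra).
  apply rising_le_tangent; assumption.
Qed.

Lemma Gamma_sqr_le_mul_exp b x N : 0 <= x -> 1 <= b - x ->
  Gamma b * Gamma b
  <= Gamma (b - x) * Gamma (b + x) * exp (- (x * x * (/ b - / (b + INR N)))).
Proof.
  intros Hx Hbx; assert (HN := pos_INR N).
  assert (Hshift := Gamma_sqr_le (b + INR N) x Hx ltac:(lra)).
  replace (b + INR N - x) with ((b - x) + INR N) in Hshift by ring.
  replace (b + INR N + x) with ((b + x) + INR N) in Hshift by ring.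
  rewrite !Gamma_add_nat in Hshift by lra.
  assert (Hrising := rising_sub_mul_add_le b x N ltac:(lra)).
  assert (HR := rising_pos b N ltac:(lra)).
  apply Rmult_le_reg_r with (rising b N * rising b N); [apply Rmult_lt_0_compat; exact HR|].
  apply Rle_trans with (Gamma (b - x) * Gamma (b + x) * (rising (b - x) N * rising (b + x) N));
    [lra|].
  replace (Gamma (b - x) * Gamma (b + x) * exp (- (x * x * (/ b - / (b + INR N)))) *
           (rising b N * rising b N))
    with (Gamma (b - x) * Gamma (b + x) *
          (rising b N * rising b N * exp (- (x * x * (/ b - / (b + INR N)))))) by ring.
  apply Rmult_le_compat_l; [|exact Hrising].
  apply Rmult_le_pos; left; apply Gamma_pos; lra.
Qed.

Lemma exponent_le b d x B : 1 <= b -> 2 <= d -> 0 <= x <= b - 1 ->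
  b * (3 * b + d) * (2 * b + d) <= B ->
  2 * x * (x + d) / (2 * b + d) <= x * x * (/ b - / B) + 2 * x * d / (2 * b + x + d - 1).
Proof.
  intros Hb Hd Hx HB.
  set (m := 2 * b + x + d - 1); set (D := 2 * b + d).
  assert (Hm : 0 < m) by (unfold m; lra).
  assert (HD : 0 < D) by (unfold D; lra).
  assert (HB0 : 0 < B) by (apply Rlt_le_trans with (b * (3 * b + d) * D); [|exact HB];
                           apply Rmult_lt_0_compat; [apply Rmult_lt_0_compat|]; lra).
  assert (Hid : x * x * (/ b - / B) + 2 * x * d / m - 2 * x * (x + d) / D
                = x * (d * (x * x + (d - 1) * x + 2 * b) * B - x * b * m * D) / (b * m * D * B))
    by (unfold m, D; field; repeat split; lra).
  assert (Hxm : x * m <= b * (3 * b + d)) by (apply Rmult_le_compat; unfold m; lra).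
  assert (Hnum : x * b * m * D <= d * (x * x + (d - 1) * x + 2 * b) * B).
  { apply Rle_trans with (b * B).
    - replace (x * b * m * D) with (b * ((x * m) * D)) by ring.
      apply Rmult_le_compat_l; [lra|].
      apply Rle_trans with (b * (3 * b + d) * D); [|exact HB].
      apply Rmult_le_compat_r; lra.
    - apply Rmult_le_compat_r; [lra|].
      assert (0 <= x * x + (d - 1) * x) by nra.
      nra. }
  assert (0 <= x * (d * (x * x + (d - 1) * x + 2 * b) * B - x * b * m * D) / (b * m * D * B)).
  { apply Rdiv_le_0_compat; [apply Rmult_le_pos; lra|].
    repeat apply Rmult_lt_0_compat; lra. }
  lra.
Qed.

Lemma rho_pos d L x : (1 <= L)%nat -> 0 <= x <= INR L - 1 -> 0 < rho d L x.
Proof.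
  intros HL Hx; apply le_INR in HL; assert (Hd := pos_INR d); simpl in HL.
  unfold rho; apply Rdiv_lt_0_compat; apply Rmult_lt_0_compat; apply Gamma_pos; lra.
Qed.

Lemma rho_le_exp d L x : (2 <= d)%nat -> (1 <= L)%nat -> 0 <= x <= INR L - 1 ->
  rho d L x <= exp (- (2 * x * (x + INR d)) / (2 * INR L + INR d)).
Proof.
  intros Hd HL Hx; apply le_INR in Hd, HL; simpl in Hd, HL.
  unfold rho; set (b := INR L) in *; set (dd := INR d) in *.
  set (N := (L * (3 * L + d) * (2 * L + d))%nat).
  assert (HN : INR N = b * (3 * b + dd) * (2 * b + dd))
    by (unfold N, b, dd; rewrite !mult_INR, !plus_INR, !mult_INR; simpl; ring).
  assert (Gbd := Gamma_add_nat b d ltac:(lra)).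
  assert (Gbxd := Gamma_add_nat (b + x) d ltac:(lra)).
  replace (b + x + INR d) with (b + dd + x) in Gbxd by (unfold dd; ring).
  fold dd in Gbd; rewrite Gbd, Gbxd.
  assert (HGamma := Gamma_sqr_le_mul_exp b x N (proj1 Hx) ltac:(lra)).
  assert (Hrising := rising_le_mul_exp b x d ltac:(lra) (proj1 Hx) ltac:(fold dd; lra)).
  fold dd in Hrising; rewrite HN in HGamma.
  assert (Gm := Gamma_pos (b - x) ltac:(lra)); assert (Gp := Gamma_pos (b + x) ltac:(lra)).
  assert (Rp := rising_pos (b + x) d ltac:(lra)).
  set (E1 := exp (- (x * x * (/ b - / (b + b * (3 * b + dd) * (2 * b + dd)))))) in HGamma.
  set (E2 := exp (- (2 * x * dd / (2 * b + x + dd - 1)))) in Hrising.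
  apply Rle_trans with (E1 * E2).
  - replace (Gamma b * rising b d * Gamma b / (Gamma (b + x) * rising (b + x) d * Gamma (b - x)))
      with ((Gamma b * Gamma b) * rising b d / ((Gamma (b - x) * Gamma (b + x)) * rising (b + x) d))
      by (field; lra).
    replace (E1 * E2) with ((Gamma (b - x) * Gamma (b + x) * E1) * (rising (b + x) d * E2)
                            / ((Gamma (b - x) * Gamma (b + x)) * rising (b + x) d))
      by (field; lra).
    unfold Rdiv; apply Rmult_le_compat_r;
      [left; apply Rinv_0_lt_compat, Rmult_lt_0_compat; [apply Rmult_lt_0_compat|]; lra|].
    apply Rmult_le_compat; [|left; apply rising_pos; lra|exact HGamma|exact Hrising].
    apply Rmult_le_pos; left; apply Gamma_pos; lra.
  - unfold E1, E2; rewrite <- exp_plus; apply exp_le_exp.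
    assert (Hexp := exponent_le b dd x (b + b * (3 * b + dd) * (2 * b + dd))
                      ltac:(lra) ltac:(lra) Hx).
    assert (0 <= b * (3 * b + dd) * (2 * b + dd))
      by (apply Rmult_le_pos; [apply Rmult_le_pos|]; lra).
    unfold Rdiv in *; lra.
Qed.

Lemma INR_fact_eq_Gamma n y : INR n + 1 = y -> INR (fact n) = Gamma y / Gamma 1.
Proof.
  intros <-; rewrite Gamma_nat_succ; field.
  apply Rgt_not_eq, Gamma_pos; lra.
Qed.

Lemma fact_ratio_eq_rho d L k : (1 <= L)%nat -> (k <= L - 1)%nat ->
  INR (fact (L - 1 + d)) * INR (fact (L - 1))
    / (INR (fact (L - 1 + d + k)) * INR (fact (L - 1 - k)))
  = rho d L (INR k).
Proof.
  intros HL Hk.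
  assert (Hkb : INR k <= INR L - 1)
    by (apply le_INR in Hk; rewrite minus_INR in Hk by exact HL; simpl in Hk; lra).
  rewrite (INR_fact_eq_Gamma (L - 1 + d) (INR L + INR d))
    by (rewrite plus_INR, minus_INR by exact HL; simpl; ring).
  rewrite (INR_fact_eq_Gamma (L - 1) (INR L)) by (rewrite minus_INR by exact HL; simpl; ring).
  rewrite (INR_fact_eq_Gamma (L - 1 + d + k) (INR L + INR d + INR k))
    by (rewrite !plus_INR, minus_INR by exact HL; simpl; ring).
  rewrite (INR_fact_eq_Gamma (L - 1 - k) (INR L - INR k))
    by (rewrite !minus_INR by lia; simpl; ring).
  assert (Hk0 := pos_INR k); assert (Hd0 := pos_INR d).
  assert (G1 := Gamma_pos 1 ltac:(lra)).
  assert (G2 := Gamma_pos (INR L + INR d + INR k) ltac:(lra)).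
  assert (G3 := Gamma_pos (INR L - INR k) ltac:(lra)).
  unfold rho; field; repeat split; lra.
Qed.

Theorem mainTheorem6 (d L : nat) (hd : (2 <= d)%nat) (hL : (1 <= L)%nat) :
  (forall x : R, 0 <= x <= INR L - 1 ->
     0 < rho d L x /\
     rho d L x <= exp (- (2 * x * (x + INR d)) / (2 * INR L + INR d))) /\
  (forall k : nat, (k <= L - 1)%nat ->
     INR (fact (L - 1 + d)) * INR (fact (L - 1))
       / (INR (fact (L - 1 + d + k)) * INR (fact (L - 1 - k)))
     <= exp (- (2 * INR k * (INR k + INR d)) / (2 * INR L + INR d))).
Proof.
  split.
  - intros x Hx; split; [apply rho_pos|apply rho_le_exp]; assumption.
  - intros k Hk; rewrite fact_ratio_eq_rho by assumption.
    apply rho_le_exp; try assumption.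
    split; [apply pos_INR|].
    apply le_INR in Hk; rewrite minus_INR in Hk by exact hL; simpl in Hk; exact Hk.
Qed.
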